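(* In the privacy game, let $(\alpha^0,\beta^0)\in A\times B$ be arbitrary and let $\{(\alpha^k,\beta^k)\}_{k\in\mathbb{N}}$ be generated by the following best-response dynamics: for $k=1,2,\dots$, if $k$ is even, choose $\alpha^k\in\arg\min_{\alpha\in A}U(\alpha,\beta^{k-1})$ and set $\beta^k=\beta^{k-1}$; if $k$ is odd, choose $\beta^k\in\arg\min_{\beta\in B}V(\alpha^{k-1},\beta)$ and set $\alpha^k=\alpha^{k-1}$. Then for every $\epsilon>0$ there exists $K_\epsilon\in\mathbb{N}$ such that $(\alpha^k,\beta^k)\in\mathcal{N}_\epsilon$ for all $k\ge K_\epsilon$, where $\mathcal{N}_\epsilon=\{(\alpha,\beta)\in A\times B: U(\alpha,\beta)\le U(\alpha',\beta)+\epsilon\ \forall\alpha'\in A,\ V(\alpha,\beta)\le V(\alpha,\beta')+\epsilon\ \forall\beta'\in B\}$ is the set of $\epsilon$-Nash equilibria.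
   Context: Privacy game. $\mathcal{X},\mathcal{W},\mathcal{Y}$ are finite nonempty sets; $p$ is a joint probability mass function of $(X,Z,W)$ on $\mathcal{X}\times\mathcal{X}\times\mathcal{W}$; $d:\mathcal{X}\times\mathcal{X}\to\mathbb{R}_{\ge 0}$; $\varrho$ is a real constant (privacy ratio). Sender policies: $A=\{\alpha=(\alpha_{yzw}):\alpha_{yzw}\in[0,1],\ \sum_{y\in\mathcal{Y}}\alpha_{yzw}=1\ \forall (z,w)\in\mathcal{X}\times\mathcal{W}\}$, with $\alpha_{yzw}=\mathbb{P}\{Y=y\mid Z=z,W=w\}$. Receiver policies: $B=\{\beta=(\beta_{\hat x y}):\beta_{\hat x y}\in[0,1],\ \sum_{\hat x\in\mathcal{X}}\beta_{\hat x y}=1\ \forall y\in\mathcal{Y}\}$, with $\beta_{\hat x y}=\mathbb{P}\{\hat X=\hat x\mid Y=y\}$. Define $\xi(\alpha,\beta)=\sum_{x,\hat x\in\mathcal{X}}\sum_{y\in\mathcal{Y}}\sum_{z\in\mathcal{X}}\sum_{w\in\mathcal{W}}d(x,\hat x)\beta_{\hat x y}\alpha_{yzw}p(x,z,w)$ (the expected distortion $\mathbb{E}\{d(X,\hat X)\}$) and $\zeta(\alpha)=\sum_{y,w}P_{yw}\log\frac{P_{yw}}{P_y P_w}$ (with $0\log 0=0$), where $P_{yw}=\sum_{z,x}\alpha_{yzw}p(x,z,w)$, $P_y=\sum_{w}P_{yw}$, $P_w=\sum_{z,x}p(x,z,w)$ (the mutual information $I(Y;W)$). Sender cost $U(\alpha,\beta)=\xi(\alpha,\beta)+\varrho\zeta(\alpha)$;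 receiver cost $V(\alpha,\beta)=\xi(\alpha,\beta)$. *)

From HB Require Import structures.
From mathcomp Require Import all_boot all_order all_algebra.
From mathcomp Require Import reals exp.
Set Implicit Arguments. Unset Strict Implicit. Unset Printing Implicit Defensive.
Import Order.TTheory GRing.Theory Num.Theory.
Local Open Scope ring_scope.

Section PrivacyGame.
Variables (R : realType) (X W Y : finType).
(* joint pmf p(x,z,w) of (X,Z,W), distortion d, privacy ratio rho *)
Variables (p : X -> X -> W -> R) (d : X -> X -> R) (rho : R).

(* sender policy alpha y z w = P{Y=y | Z=z, W=w} *)
Definition sender_policy := Y -> X -> W -> R.
(* receiver policy beta xh y = P{Xhat = xh | Y = y} *)
Definition receiver_policy := X -> Y -> R.

Definition in_A (a : sender_policy) : Prop :=
  (forall y z w, 0 <= a y z w <= 1) /\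
  (forall z w, \sum_(y : Y) a y z w = 1).

Definition in_B (b : receiver_policy) : Prop :=
  (forall xh y, 0 <= b xh y <= 1) /\
  (forall y, \sum_(xh : X) b xh y = 1).

Definition xi (a : sender_policy) (b : receiver_policy) : R :=
  \sum_(x : X) \sum_(xh : X) \sum_(y : Y) \sum_(z : X) \sum_(w : W)
     d x xh * b xh y * a y z w * p x z w.

Definition P_yw (a : sender_policy) (y : Y) (w : W) : R :=
  \sum_(z : X) \sum_(x : X) a y z w * p x z w.
Definition P_y (a : sender_policy) (y : Y) : R := \sum_(w : W) P_yw a y w.
Definition P_w (w : W) : R := \sum_(z : X) \sum_(x : X) p x z w.

(* mutual information I(Y;W), with the convention 0 log 0 = 0 *)
Definition zeta (a : sender_policy) : R :=
  \sum_(y : Y) \sum_(w : W)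
    (if P_yw a y w == 0 then 0
     else P_yw a y w * ln (P_yw a y w / (P_y a y * P_w w))).

Definition U (a : sender_policy) (b : receiver_policy) : R := xi a b + rho * zeta a.
Definition V (a : sender_policy) (b : receiver_policy) : R := xi a b.

Definition eps_Nash (eps : R) (a : sender_policy) (b : receiver_policy) : Prop :=
  in_A a /\ in_B b /\
  (forall a', in_A a' -> U a b <= U a' b + eps) /\
  (forall b', in_B b' -> V a b <= V a b' + eps).

Definition best_response_dynamics (a : nat -> sender_policy)
    (b : nat -> receiver_policy) : Prop :=
  in_A (a 0%N) /\ in_B (b 0%N) /\
  forall k : nat, (1 <= k)%N ->
    if ~~ odd k then
      [/\ in_A (a k), (forall a', in_A a' -> U (a k) (b k.-1) <= U a' (b k.-1))
        & b k = b k.-1]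
    else
      [/\ in_B (b k), (forall b', in_B b' -> V (a k.-1) (b k) <= V (a k.-1) b')
        & a k = a k.-1].

End PrivacyGame.

(** The game is an exact potential game with potential [U]: the receiver's
   cost [V] differs from [U] by [rho * zeta], which does not depend on the
   receiver's policy.  Hence [U] never increases along best-response dynamics.
   It is bounded below, because the distortion is nonnegative and each term of
   the mutual information is bounded by [1] in absolute value, so the decrease
   of [U] per step eventually falls below [eps].  At such a step one player has
   just best-responded and the other is about to do so, and the small decrease
   says that neither can gain more than [eps] by deviating. *)
From HB Require Import structures.
From mathcomp Require Import all_boot all_order all_algebra.
From mathcomp Require Import reals exp.
From mathcomp Require Import classical_sets lra.
Set Implicit Arguments. Unset Strict Implicit. Unset Printing Implicit Defensive.
Import Order.TTheory GRing.Theory Num.Theory.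
Local Open Scope ring_scope.

Lemma nonincreasing_bounded_eventually_small_steps (R : realType)
    (u : nat -> R) (m : R) :
  (forall k, u k.+1 <= u k) -> (forall k, m <= u k) ->
  forall eps, 0 < eps -> exists K, forall k, (K <= k)%N -> u k - u k.+1 <= eps.
Proof.
move=> u_decr u_ge eps eps_gt0.
have u_le : forall K k, (K <= k)%N -> u k <= u K.
  move=> K k /subnK <-; elim: (k - K)%N => [|n IH] //.
  by rewrite addSn; apply: le_trans (u_decr _) IH.
pose E : set R := range (fun k => - u k).
have E_sup : has_sup E.
  split; first by exists (- u 0%N), 0%N.
  by exists (- m) => _ [k _ <-]; rewrite lerN2.
have [_ [K _ <-] supE_lt] := sup_adherent eps_gt0 E_sup.
exists K => k Kk.
have : - u k.+1 <= sup E by apply: sup_upper_bound => //; exists k.+1.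
have := u_le K k Kk; lra.
Qed.

(* [q <= q / (py * pw) <= q^-1] bounds the logarithm by [- ln q], and
   [- q * ln q < 1] since [ln x < x]. *)
Lemma normr_mul_ln_ratio_le1 (R : realType) (q py pw : R) :
  0 < q -> q <= py <= 1 -> q <= pw <= 1 -> `|q * ln (q / (py * pw))| <= 1.
Proof.
move=> q_gt0 /andP[q_le_py py_le1] /andP[q_le_pw pw_le1].
have py_gt0 : 0 < py by apply: lt_le_trans q_le_py.
have pw_gt0 : 0 < pw by apply: lt_le_trans q_le_pw.
have pypw_gt0 : 0 < py * pw by apply: mulr_gt0.
have r_gt0 : 0 < q / (py * pw) by apply: divr_gt0.
have pypw_le1 : py * pw <= 1 by nra.
have q_le_r : q <= q / (py * pw) by rewrite ler_pdivlMr //; nra.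
have r_le_invq : q / (py * pw) <= q^-1.
  by rewrite ler_pdivrMr // mulrC ler_pdivlMr //; nra.
have lnq_le : ln q <= ln (q / (py * pw)) by rewrite ler_ln ?posrE.
have le_Nlnq : ln (q / (py * pw)) <= - ln q.
  by rewrite -lnV ?posrE // ler_ln ?posrE ?invr_gt0.
have : ln q^-1 < q^-1 by apply: ln_sublinear; rewrite invr_gt0.
rewrite lnV ?posrE // => Nlnq_lt.
have qNlnq_lt1 : q * - ln q < 1 by rewrite -(mulfV (lt0r_neq0 q_gt0)) ltr_pM2l.
rewrite normrM gtr0_norm //; apply: le_trans (ltW qNlnq_lt1).
by rewrite ler_pM2l // ler_norml le_Nlnq andbT opprK.
Qed.

Section CostBounds.
Variables (R : realType) (X W Y : finType) (p : X -> X -> W -> R) (d : X -> X -> R).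
Hypothesis p_ge0 : forall x z w, 0 <= p x z w.
Hypothesis p_sum1 : \sum_(x : X) \sum_(z : X) \sum_(w : W) p x z w = 1.
Hypothesis d_ge0 : forall x xh, 0 <= d x xh.

Lemma sum_P_w : \sum_(w : W) P_w p w = 1.
Proof.
rewrite -p_sum1 exchange_big /=; under eq_bigr do rewrite exchange_big /=.
by rewrite exchange_big.
Qed.

Lemma P_w_le1 w : P_w p w <= 1.
Proof.
rewrite -sum_P_w (bigD1 w) //= lerDl; apply: sumr_ge0 => w' _.
by apply: sumr_ge0 => z _; apply: sumr_ge0.
Qed.

Variable a : sender_policy R X W Y.
Hypothesis a_in_A : in_A a.

Lemma P_yw_ge0 y w : 0 <= P_yw p a y w.
Proof.
case: a_in_A => a01 _; apply: sumr_ge0 => z _; apply: sumr_ge0 => x _.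
by apply: mulr_ge0 => //; case/andP: (a01 y z w).
Qed.

Lemma P_yw_le_P_w y w : P_yw p a y w <= P_w p w.
Proof.
case: a_in_A => a01 _; apply: ler_sum => z _; apply: ler_sum => x _.
by rewrite ler_piMl //; case/andP: (a01 y z w).
Qed.

Lemma P_yw_le_P_y y w : P_yw p a y w <= P_y p a y.
Proof.
by rewrite /P_y (bigD1 w) //= lerDl; apply: sumr_ge0 => w' _; apply: P_yw_ge0.
Qed.

Lemma P_y_le1 y : P_y p a y <= 1.
Proof. by rewrite -sum_P_w; apply: ler_sum => w _; apply: P_yw_le_P_w. Qed.

Lemma normr_zeta_le : `|zeta p a| <= (#|Y| * #|W|)%:R.
Proof.
have -> : (#|Y| * #|W|)%:R = \sum_(y : Y) \sum_(w : W) (1 : R).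
  by rewrite !sumr_const -mulrnA mulnC !cardE.
apply: le_trans (ler_norm_sum _ _ _) _; apply: ler_sum => y _.
apply: le_trans (ler_norm_sum _ _ _) _; apply: ler_sum => w _.
case: eqP => [_|/eqP Pyw_neq0]; first by rewrite normr0.
apply: normr_mul_ln_ratio_le1.
- by rewrite lt0r Pyw_neq0 P_yw_ge0.
- by rewrite P_yw_le_P_y P_y_le1.
- by rewrite P_yw_le_P_w P_w_le1.
Qed.

Lemma xi_ge0 b : in_B b -> 0 <= xi p d a b.
Proof.
case: a_in_A => a01 _ [b01 _].
apply: sumr_ge0 => x _; apply: sumr_ge0 => xh _; apply: sumr_ge0 => y _.
apply: sumr_ge0 => z _; apply: sumr_ge0 => w _.
case/andP: (a01 y z w) => a_ge0 _; case/andP: (b01 xh y) => b_ge0 _.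
by rewrite !mulr_ge0.
Qed.

Lemma U_lower_bound rho b :
  in_B b -> - (`|rho| * (#|Y| * #|W|)%:R) <= U p d rho a b.
Proof.
move=> b_in_B; have := xi_ge0 b_in_B.
have : `|rho * zeta p a| <= `|rho| * (#|Y| * #|W|)%:R.
  by rewrite normrM ler_wpM2l // normr_zeta_le.
have := ler_norm (- (rho * zeta p a)); rewrite normrN /U; lra.
Qed.

End CostBounds.

Section BestResponseDynamics.
Variables (R : realType) (X W Y : finType) (p : X -> X -> W -> R) (d : X -> X -> R).
Variable rho : R.
Variables (a : nat -> sender_policy R X W Y) (b : nat -> receiver_policy R X Y).
Hypothesis dyn : best_response_dynamics p d rho a b.

Local Notation u k := (U p d rho (a k) (b k)).

Lemma sender_step k : (1 <= k)%N -> ~~ odd k ->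
  [/\ in_A (a k), forall a', in_A a' -> u k <= U p d rho a' (b k) & b k = b k.-1].
Proof.
case: dyn => _ [_ step] k_ge1 k_even; have := step k k_ge1; rewrite k_even.
by case=> a_in_A a_best b_eq; rewrite b_eq.
Qed.

Lemma receiver_step k : (1 <= k)%N -> odd k ->
  [/\ in_B (b k), forall b', in_B b' -> V p d (a k) (b k) <= V p d (a k) b'
    & a k = a k.-1].
Proof.
case: dyn => _ [_ step] k_ge1 k_odd; have := step k k_ge1; rewrite k_odd.
by case=> b_in_B b_best a_eq; rewrite a_eq.
Qed.

Lemma dynamics_in_AB k : in_A (a k) /\ in_B (b k).
Proof.
elim: k => [|k [a_in_A b_in_B]]; first by case: dyn => ? [].
case: (boolP (odd k.+1)) => [k1_odd|k1_even].
- by have [? _ ->] := receiver_step (ltn0Sn k) k1_odd.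
- by have [? _ ->] := sender_step (ltn0Sn k) k1_even.
Qed.

Lemma U_dynamics_nonincreasing k : u k.+1 <= u k.
Proof.
case: (boolP (odd k.+1)) => [k1_odd|k1_even].
- have [_ b_best a_eq] := receiver_step (ltn0Sn k) k1_odd.
  rewrite /U a_eq lerD2r; rewrite a_eq in b_best.
  by apply: b_best; case: (dynamics_in_AB k).
- have [_ a_best b_eq] := sender_step (ltn0Sn k) k1_even.
  have [a_in_A _] := dynamics_in_AB k.
  by apply: le_trans (a_best _ a_in_A) _; rewrite b_eq.
Qed.

Lemma sender_eps_best k eps : (1 <= k)%N -> 0 < eps -> u k - u k.+1 <= eps ->
  forall a', in_A a' -> u k <= U p d rho a' (b k) + eps.
Proof.
move=> k_ge1 eps_gt0 step_small a' a'_in_A.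
case: (boolP (odd k)) => [k_odd|k_even].
- have k1_even : ~~ odd k.+1 by rewrite /= negbK.
  have [_ a_best b_eq] := sender_step (ltn0Sn k) k1_even.
  rewrite b_eq in a_best step_small; have := a_best a' a'_in_A; lra.
- have [_ a_best _] := sender_step k_ge1 k_even.
  have := a_best a' a'_in_A; lra.
Qed.

Lemma receiver_eps_best k eps : (1 <= k)%N -> 0 < eps -> u k - u k.+1 <= eps ->
  forall b', in_B b' -> V p d (a k) (b k) <= V p d (a k) b' + eps.
Proof.
move=> k_ge1 eps_gt0 step_small b' b'_in_B.
case: (boolP (odd k)) => [k_odd|k_even].
- have [_ b_best _] := receiver_step k_ge1 k_odd.
  have := b_best b' b'_in_B; lra.
- have [_ b_best a_eq] := receiver_step (ltn0Sn k) k_even.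
  rewrite a_eq in b_best step_small; have := b_best b' b'_in_B.
  move: step_small; rewrite /U /V; lra.
Qed.

Lemma eps_Nash_of_small_step k eps : (1 <= k)%N -> 0 < eps ->
  u k - u k.+1 <= eps -> eps_Nash p d rho eps (a k) (b k).
Proof.
move=> k_ge1 eps_gt0 step_small; have [a_in_A b_in_B] := dynamics_in_AB k.
split=> //; split=> //; split.
- exact: sender_eps_best.
- exact: receiver_eps_best.
Qed.

End BestResponseDynamics.

Theorem mainTheorem5 (R : realType) (X W Y : finType)
  (p : X -> X -> W -> R) (d : X -> X -> R) (rho : R)
  (hX : (0 < #|X|)%N) (hW : (0 < #|W|)%N) (hY : (0 < #|Y|)%N)
  (p_ge0 : forall x z w, 0 <= p x z w)
  (p_sum1 : \sum_(x : X) \sum_(z : X) \sum_(w : W) p x z w = 1)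
  (d_ge0 : forall x xh, 0 <= d x xh)
  (a : nat -> sender_policy R X W Y) (b : nat -> receiver_policy R X Y) :
  best_response_dynamics p d rho a b ->
  forall eps : R, 0 < eps ->
  exists K : nat, forall k : nat, (K <= k)%N -> eps_Nash p d rho eps (a k) (b k).
Proof.
move=> dyn eps eps_gt0.
have U_ge k : - (`|rho| * (#|Y| * #|W|)%:R) <= U p d rho (a k) (b k).
  have [a_in_A b_in_B] := dynamics_in_AB dyn k.
  exact: U_lower_bound.
have [K small_steps] := nonincreasing_bounded_eventually_small_steps
  (U_dynamics_nonincreasing dyn) U_ge eps_gt0.
exists K.+1 => k K_lt_k.
apply: eps_Nash_of_small_step => //; first exact: leq_trans K_lt_k.
exact/small_steps/ltnW.
Qed.
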